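(* Let $\mathcal A(x,m)=\{\mu\in\mathcal P(\mathcal X):\mu\ll m\}$ (the dual sets of the worst-case mapping $\sigma(x,m,v)=\max_{y:m(y)>0}v(y)$). Then the associated risk multikernel $\mathfrak M$ is not semi-differentiable at $\mathcal I$ in any direction $K\in\mathcal T_{\mathcal Q}(\mathcal I)$ with $K\ne0$.
   Context: $\mathcal X$ is a finite set, $\mathcal P(\mathcal X)$ the probability measures on $\mathcal X$, $\mathcal S$ the vector space of signed kernels $K:\mathcal X\to\mathcal M(\mathcal X)$, written $K(y|x)$, with norm $\|K\|=\sup\{\sum_{y}\varphi(y)K(y|x):x\in\mathcal X,\ -1\le\varphi\le1\}$; $\mathcal Q\subset\mathcal S$ the stochastic kernels; $\mathcal I(x)=\delta_x$. $\mathrm d(K,B)=\inf_{M\in B}\|K-M\|$ ($=+\infty$ if $B=\emptyset$), and $\mathrm{dist}(\mathcal S_1,\mathcal S_2)=\max(\sup_{K\in\mathcal S_1}\mathrm d(K,\mathcal S_2),\sup_{K\in\mathcal S_2}\mathrm d(K,\mathcal S_1))$. The tangent cone is $\mathcal T_{\mathcal Q}(\mathcal I)=\{K\in\mathcal S:\lim_{\tau\downarrow0}\mathrm d(K,\frac1\tau(\mathcal Q-\mathcal I))=0\}$. The risk multikernel associated with $\mathcal A$ is $\mathfrak M(Q)=\{M\in\mathcal Q: M(x)\in\mathcal A(x,Q(x))\ \forall x\}$. $\mathfrak M$ is semi-differentiable at $\mathcal I$ in direction $K\in\mathcal T_{\mathcal Q}(\mathcal I)$ if there is a nonempty set $\mathfrak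 D(K)\subset\mathcal S$ such that for every $\varepsilon_n\downarrow0$ and every $K_n\to K$ with $K_n\in\mathcal T_{\mathcal Q}(\mathcal I)$, $\lim_{n}\mathrm{dist}\big(\frac1{\varepsilon_n}[\mathfrak M(\mathcal I+\varepsilon_nK_n)-\mathcal I],\mathfrak D(K)\big)=0$. *)

From mathcomp Require Import ssreflect ssrfun ssrbool eqtype ssrnat seq fintype bigop.
From Stdlib Require Import Reals.
Open Scope R_scope.

Set Implicit Arguments.
Unset Strict Implicit.

Section Kernels.
Variable X : finType.

(* A signed kernel K : X -> M(X); we write  K x y  for  K(y|x). *)
Definition kernel := X -> X -> R.

Definition rsum (f : X -> R) : R := \big[Rplus/0]_(y : X) f y.

Definition kzero : kernel := fun _ _ => 0.
Definition kadd (K M : kernel) : kernel := fun x y => K x y + M x y.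
Definition ksub (K M : kernel) : kernel := fun x y => K x y - M x y.
Definition kscale (c : R) (K : kernel) : kernel := fun x y => c * K x y.

Definition kid : kernel := fun x y => if x == y then 1 else 0.

Definition norm_le (K : kernel) (r : R) : Prop :=
  forall (x : X) (phi : X -> R), (forall y, -1 <= phi y <= 1) ->
    rsum (fun y => phi y * K x y) <= r.

Definition is_prob (mu : X -> R) : Prop := (forall y, 0 <= mu y) /\ rsum mu = 1.

Definition stochastic (K : kernel) : Prop := forall x, is_prob (K x).

Definition tangent (K : kernel) : Prop :=
  forall eps, 0 < eps -> exists delta, 0 < delta /\
    forall tau, 0 < tau < delta ->
      exists M, stochastic M /\ norm_le (ksub K (kscale (/ tau) (ksub M kid))) eps.

Definition Aset (x : X) (m : X -> R) (mu : X -> R) : Prop :=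
  is_prob mu /\ (forall y, m y = 0 -> mu y = 0).

Definition riskM (Q : kernel) (M : kernel) : Prop :=
  stochastic M /\ forall x, Aset x (Q x) (M x).

Definition diff_quot (eps : R) (K' : kernel) (N : kernel) : Prop :=
  exists M, riskM (kadd kid (kscale eps K')) M /\ N = kscale (/ eps) (ksub M kid).

(* lim_n dist(S n, D) = 0, with dist the Hausdorff distance (d(K, empty) = +oo) *)
Definition dist_to0 (S : nat -> kernel -> Prop) (D : kernel -> Prop) : Prop :=
  forall eps, 0 < eps -> exists N, forall n, (N <= n)%nat ->
    (forall K, S n K -> exists M, D M /\ norm_le (ksub K M) eps) /\
    (forall M, D M -> exists K, S n K /\ norm_le (ksub M K) eps).

Definition seq_down0 (e : nat -> R) : Prop :=
  (forall n, 0 < e n) /\ (forall n, e (S n) <= e n) /\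
  (forall eps, 0 < eps -> exists N, forall n, (N <= n)%nat -> e n <= eps).

Definition kconv (Kn : nat -> kernel) (K : kernel) : Prop :=
  forall eps, 0 < eps -> exists N, forall n, (N <= n)%nat -> norm_le (ksub (Kn n) K) eps.

Definition semi_diff (K : kernel) : Prop :=
  exists D : kernel -> Prop, (exists M, D M) /\
    forall (e : nat -> R) (Kn : nat -> kernel),
      seq_down0 e -> (forall n, tangent (Kn n)) -> kconv Kn K ->
      dist_to0 (fun n => diff_quot (e n) (Kn n)) D.

End Kernels.

(** Rows of a tangent kernel sum to [0], so [K <> 0] has an entry [K(y|x) <> 0] with
    [x <> y]. Then [(I + eps K)(y|x) <> 0] and, for small [eps], the diagonal of
    [I + eps K] stays nonzero, so [M(I + eps K)] contains the kernel moving all the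
    mass at [x] to [y]: the set [(1/eps)[M(I + eps K) - I]] contains a kernel of norm
    [2/eps], while all its elements have norm at most [2/eps]. Hausdorff convergence
    of these sets to a fixed [D] along [eps_n] would put the sets for [eps_n] and
    [eps_m] eventually within distance [2] of each other, i.e. [2/eps_n <= 2 + 2/eps_m]
    for all large [n, m], which fails as [eps_n -> 0]. *)

From HB Require Import structures.
From mathcomp Require Import ssreflect ssrfun ssrbool eqtype ssrnat seq fintype bigop.
From Stdlib Require Import Reals Lra Classical FunctionalExtensionality.
Open Scope R_scope.

HB.instance Definition _ := Monoid.isComLaw.Build R 0 Rplus
  (fun a b c => esym (Rplus_assoc a b c)) Rplus_comm Rplus_0_l.

Section Kernels.
Context {X : finType}.
Implicit Types (f g phi mu : X -> R) (K M : kernel X) (a x y z : X).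

Lemma eq_rsum {f g : X -> R} : (forall z, f z = g z) -> rsum f = rsum g.
Proof. by move=> efg; apply: eq_bigr => z _. Qed.

Lemma rsumD f g : rsum (fun z => f z + g z) = rsum f + rsum g.
Proof. exact: big_split. Qed.

Lemma rsumZ c f : rsum (fun z => c * f z) = c * rsum f.
Proof.
by rewrite /rsum (big_endo (fun r => c * r)) // => [r s|]; ring.
Qed.

Lemma rsumB f g : rsum (fun z => f z - g z) = rsum f - rsum g.
Proof.
rewrite (eq_rsum (g := fun z => f z + -1 * g z)); last by move=> z; ring.
by rewrite rsumD rsumZ; ring.
Qed.

Lemma rsum_le f g : (forall z, f z <= g z) -> rsum f <= rsum g.
Proof.
by move=> fg; rewrite /rsum; elim/big_rec2: _ => [|i a b _ ab]; [lra | have := fg i; lra].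
Qed.

Lemma rsum_ge f a : (forall z, 0 <= f z) -> f a <= rsum f.
Proof.
move=> f_ge0; rewrite /rsum (bigD1 a) //=.
suff : 0 <= \big[Rplus/0]_(i | i != a) f i by lra.
by elim/big_rec: _ => [|i s _ Hs]; [lra | have := f_ge0 i; lra].
Qed.

Lemma rsum_mul_kid f a : rsum (fun z => f z * kid a z) = f a.
Proof.
rewrite /rsum (bigD1 a) //= /kid eqxx big1 => [|z /negbTE]; first ring.
by rewrite eq_sym => ->; ring.
Qed.

Lemma rsum_kid a : rsum (kid a) = 1.
Proof. by rewrite -[RHS](rsum_mul_kid (fun=> 1) a); apply: eq_rsum => z; ring. Qed.

Lemma rsum_test_prob {phi mu} : (forall z, -1 <= phi z <= 1) -> is_prob mu ->
  -1 <= rsum (fun z => phi z * mu z) <= 1.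
Proof.
move=> phi_bd [mu_ge0 mu1].
have -> : -1 = rsum (fun z => -1 * mu z) by rewrite rsumZ mu1; ring.
by rewrite -mu1; split; apply: rsum_le => z; have := phi_bd z; have := mu_ge0 z; nra.
Qed.

Lemma kid_stochastic : stochastic (@kid X).
Proof.
by move=> x; split; [move=> y; rewrite /kid; case: (x == y); lra | exact: rsum_kid].
Qed.

Lemma norm_le_add K K1 K2 r s : (forall x y, K x y = K1 x y + K2 x y) ->
  norm_le K1 r -> norm_le K2 s -> norm_le K (r + s).
Proof.
move=> eK n1 n2 x phi phi_bd.
rewrite (eq_rsum (g := fun y => phi y * K1 x y + phi y * K2 x y)); last first.
  by move=> y; rewrite eK; ring.
by rewrite rsumD; have := n1 x phi phi_bd; have := n2 x phi phi_bd; lra.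
Qed.

Lemma norm_le_ksub_self K eps : 0 <= eps -> norm_le (ksub K K) eps.
Proof.
move=> eps_ge0 x phi _; rewrite (eq_rsum (g := fun y => 0 * phi y)).
  by rewrite rsumZ; lra.
by move=> y; rewrite /ksub; ring.
Qed.

Lemma norm_le_scale_ksub_stochastic M M' t : stochastic M -> stochastic M' -> 0 <= t ->
  norm_le (kscale t (ksub M M')) (2 * t).
Proof.
move=> sM sM' t_ge0 x phi phi_bd.
rewrite (eq_rsum (g := fun y => t * (phi y * M x y - phi y * M' x y))); last first.
  by move=> y; rewrite /kscale /ksub; ring.
rewrite rsumZ rsumB.
have := rsum_test_prob phi_bd (sM x); have := rsum_test_prob phi_bd (sM' x); nra.
Qed.

Lemma diff_quot_norm_le {eps K' N} : 0 < eps -> diff_quot eps K' N -> norm_le N (2 / eps).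
Proof.
move=> eps_gt0 [M [[sM _] ->]].
apply: norm_le_scale_ksub_stochastic => //; first exact: kid_stochastic.
by have := Rinv_0_lt_compat _ eps_gt0; lra.
Qed.

Definition kjump (x y : X) : kernel X := fun z w => if z == x then kid y w else kid z w.

Lemma kjump_stochastic x y : stochastic (kjump x y).
Proof. by move=> z; rewrite /kjump; case: (z == x); apply: kid_stochastic. Qed.

Lemma riskM_kjump Q x y : Q x y <> 0 -> (forall z, z <> x -> Q z z <> 0) ->
  riskM Q (kjump x y).
Proof.
move=> Qxy Qdiag; split; first exact: kjump_stochastic.
move=> z; split; first exact: kjump_stochastic.
move=> w Qzw; rewrite /kjump /kid; case: (eqVneq z x) => [ezx | /eqP nzx].
  by case: (eqVneq y w) => // eyw; case: Qxy; rewrite -ezx eyw.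
by case: (eqVneq z w) => // ezw; case: (Qdiag z nzx); rewrite {2}ezw.
Qed.

Lemma norm_le_kjump {x y t r} : x <> y -> norm_le (kscale t (ksub (kjump x y) (@kid X))) r ->
  2 * t <= r.
Proof.
move=> nxy /(_ x (fun z => kid y z - kid x z)) nle.
have x_neq_y : (x == y) = false by apply/eqP.
have y_neq_x : (y == x) = false by apply/eqP; apply: not_eq_sym.
suff <- : rsum (fun z => (kid y z - kid x z) * kscale t (ksub (kjump x y) (@kid X)) x z) = 2 * t.
  by apply: nle => z; rewrite /kid; case: (y == z); case: (x == z); lra.
rewrite (eq_rsum (g := fun z => t * (kid y z + kid x z))).
  by rewrite rsumZ rsumD !rsum_kid; ring.
move=> z; rewrite /kscale /ksub /kjump eqxx /kid.
case: (eqVneq x z) => [<-|_]; first by rewrite y_neq_x; ring.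
by case: (eqVneq y z) => _; ring.
Qed.

Lemma diff_quot_kjump eps K x y : 0 < eps -> x <> y -> K x y <> 0 ->
  (forall z, Rabs (K z z) < / eps) ->
  diff_quot eps K (kscale (/ eps) (ksub (kjump x y) (@kid X))).
Proof.
move=> eps_gt0 nxy Kxy Kdiag; exists (kjump x y); split => //.
apply: riskM_kjump => [|z _]; rewrite /kadd /kscale /kid.
  have -> : (x == y) = false by apply/eqP.
  by rewrite Rplus_0_l; apply: Rmult_integral_contrapositive; split; [lra|].
rewrite eqxx => Qzz.
have : eps * Rabs (K z z) < eps * / eps by apply: Rmult_lt_compat_l.
rewrite Rinv_r; last lra.
by move: Qzz; rewrite /Rabs; case: Rcase_abs; nra.
Qed.

Lemma tangent_rsum_row K x : tangent K -> rsum (K x) = 0.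
Proof.
move=> tK; suff row_small eps : 0 < eps -> Rabs (rsum (K x)) <= eps.
  case: (Req_dec (rsum (K x)) 0) => // nz; have := Rabs_pos_lt _ nz.
  by have := row_small (Rabs (rsum (K x)) / 2); lra.
move=> eps_gt0; have [d [d_gt0 tKd]] := tK _ eps_gt0.
have [M [sM nle]] := tKd (d / 2) ltac:(lra).
have row_eq c : rsum (fun y => c * ksub K (kscale (/ (d / 2)) (ksub M (@kid X))) x y) = c * rsum (K x).
  rewrite rsumZ /ksub /kscale rsumB rsumZ rsumB (proj2 (sM x)) rsum_kid; ring.
have := nle x (fun=> 1) ltac:(move=> ?; lra); have := nle x (fun=> -1) ltac:(move=> ?; lra).
by rewrite !row_eq /Rabs; case: Rcase_abs; lra.
Qed.

Lemma tangent_offdiag {K} : tangent K -> K <> @kzero X -> exists x y, x <> y /\ K x y <> 0.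
Proof.
move=> tK Knz; apply: NNPP => no_offdiag; apply: Knz.
have offdiag0 x y : x <> y -> K x y = 0.
  by move=> nxy; apply: NNPP => Kxy; apply: no_offdiag; exists x, y.
apply: functional_extensionality => x; apply: functional_extensionality => y.
case: (eqVneq x y) => [<- | /eqP nxy]; last exact: offdiag0.
rewrite /kzero -(tangent_rsum_row K x tK) -{1}(rsum_mul_kid (K x) x); apply: eq_rsum => z.
by rewrite /kid; case: (eqVneq x z) => [<-|/eqP nxz]; last rewrite offdiag0 //; ring.
Qed.

Lemma kconv_const K : kconv (fun=> K) K.
Proof. by move=> eps eps_gt0; exists 0%nat => n _; apply: norm_le_ksub_self; lra. Qed.

Lemma dist_to0_cauchy {S : nat -> kernel X -> Prop} {D} : dist_to0 S D ->
  exists N, forall n m, (N <= n)%nat -> (N <= m)%nat ->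
    forall K, S n K -> exists K', S m K' /\ norm_le (ksub K K') 2.
Proof.
move=> SD; have [N SDN] := SD 1 Rlt_0_1; exists N => n m Nn Nm K SnK.
have [M [DM KM]] := (SDN n Nn).1 K SnK; have [K' [SmK' MK']] := (SDN m Nm).2 M DM.
exists K'; split => //; rewrite -[2]/(1 + 1).
by apply: norm_le_add KM MK' => u v; rewrite /ksub; ring.
Qed.

End Kernels.

Lemma seq_down0_inv_linear a : 0 < a -> seq_down0 (fun n => / ((INR n + 1) * a)).
Proof.
move=> a_gt0; have pos n : 0 < (INR n + 1) * a by have := pos_INR n; nra.
split; [by move=> n; apply: Rinv_0_lt_compat | split].
  by move=> n; apply: Rinv_le_contravar => //; rewrite S_INR; nra.
move=> eps eps_gt0; have [N Na] := INR_archimed a (/ eps) a_gt0.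
exists N => n Nn; rewrite -(Rinv_inv eps).
apply: Rinv_le_contravar; first exact: Rinv_0_lt_compat.
by have := le_INR _ _ (ssrnat.leP Nn); nra.
Qed.

Theorem mainTheorem11 (X : finType) (K : kernel X) :
  tangent K -> K <> @kzero X -> ~ semi_diff K.
Proof.
move=> tK Knz [D [_ diffD]].
have [x [y [nxy Kxy]]] := tangent_offdiag tK Knz.
set B := rsum (fun z => Rabs (K z z)).
have diag_le z : Rabs (K z z) <= B by apply: rsum_ge => ?; apply: Rabs_pos.
have B_ge0 : 0 <= B by apply: Rle_trans (diag_le x); apply: Rabs_pos.
set e := fun n : nat => / ((INR n + 1) * (B + 1)).
have inv_e n : / e n = (INR n + 1) * (B + 1) by rewrite /e Rinv_inv.
have e_down : seq_down0 e by apply: seq_down0_inv_linear; lra.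
have [N cauchy] := dist_to0_cauchy (diffD e (fun=> K) e_down (fun=> tK) (kconv_const K)).
set n := (N + 2)%nat; set jump := kscale (/ e n) (ksub (kjump x y) (@kid X)).
have jump_in : diff_quot (e n) K jump.
  apply: diff_quot_kjump => // [|z]; first exact: e_down.1.
  by rewrite inv_e; have := diag_le z; have := pos_INR n; nra.
have [s' [s'_in close]] := cauchy _ _ (leq_addr 2 N) (leqnn N) _ jump_in.
have jump_bound : norm_le jump (2 + 2 / e N).
  apply: norm_le_add close (diff_quot_norm_le (e_down.1 N) s'_in) => u v.
  by rewrite /ksub; ring.
have := norm_le_kjump nxy jump_bound; rewrite /Rdiv !inv_e /n plus_INR /=.
by have := pos_INR N; nra.
Qed.
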